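(* Let $L=[l_{ij}]\in\mathbb R^{m\times m}$ be symmetric with all row sums equal to zero and with $0$ a simple eigenvalue. Let $r\in[0,\pi/2)$ and let $\tilde L^r$ be as defined in the context. Let $\chi_1$ and $\chi_2$ be the smallest eigenvalues of $L$ and of $\tilde L^r$, respectively, on the subspace $\{x\in\mathbb R^m: \mathbf 1^\top x=0\}$ (the orthogonal complement of $\mathbf 1=(1,\dots,1)^\top$). Then $\chi_1\ge\chi_2$.
   Context: For a real symmetric $m\times m$ matrix $M=[m_{ij}]$ with zero row sums and $r\in[0,\pi/2)$, the matrix $\tilde M^r=[\tilde m^r_{ij}]$ is defined by: for $i\ne j$, $\tilde m^r_{ij}=m_{ij}\cos r$ if $m_{ij}\le 0$ and $\tilde m^r_{ij}=m_{ij}$ if $m_{ij}>0$; and $\tilde m^r_{ii}=-\sum_{k\ne i}\tilde m^r_{ik}$. Both $L$ and $\tilde L^r$ are symmetric and leave $\{x:\mathbf 1^\top x=0\}$ invariant. *)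

From Stdlib Require Import Reals Lra.
Open Scope R_scope.

(* Vectors in R^m are functions nat -> R (only indices < m matter);
   m x m matrices are functions nat -> nat -> R. *)

Fixpoint rsum (n : nat) (f : nat -> R) : R :=
  match n with
  | O => 0
  | S k => rsum k f + f k
  end.

Definition symmetric (m : nat) (M : nat -> nat -> R) : Prop :=
  forall i j, (i < m)%nat -> (j < m)%nat -> M i j = M j i.

Definition zero_row_sums (m : nat) (M : nat -> nat -> R) : Prop :=
  forall i, (i < m)%nat -> rsum m (fun j => M i j) = 0.

Definition mulv (m : nat) (M : nat -> nat -> R) (x : nat -> R) : nat -> R :=
  fun i => rsum m (fun j => M i j * x j).

Definition nonzero_vec (m : nat) (x : nat -> R) : Prop :=
  exists i, (i < m)%nat /\ x i <> 0.

Definition eig_eq (m : nat) (M : nat -> nat -> R) (lam : R) (x : nat -> R) : Prop :=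
  forall i, (i < m)%nat -> mulv m M x i = lam * x i.

Definition is_eigenpair (m : nat) (M : nat -> nat -> R) (lam : R) (x : nat -> R) : Prop :=
  nonzero_vec m x /\ eig_eq m M lam x.

(* lam is a simple eigenvalue of the (symmetric) matrix M: its eigenspace is
   one-dimensional (for symmetric matrices geometric = algebraic multiplicity). *)
Definition simple_eigenvalue (m : nat) (M : nat -> nat -> R) (lam : R) : Prop :=
  exists v, is_eigenpair m M lam v /\
    forall x, eig_eq m M lam x -> exists c, forall i, (i < m)%nat -> x i = c * v i.

Definition in_perp1 (m : nat) (x : nat -> R) : Prop := rsum m x = 0.

Definition eigenvalue_on_perp1 (m : nat) (M : nat -> nat -> R) (lam : R) : Prop :=
  exists x, in_perp1 m x /\ is_eigenpair m M lam x.

Definition smallest_eigenvalue_on_perp1 (m : nat) (M : nat -> nat -> R) (chi : R) : Prop :=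
  eigenvalue_on_perp1 m M chi /\
  forall mu, eigenvalue_on_perp1 m M mu -> chi <= mu.

Definition tilde_off (M : nat -> nat -> R) (r : R) (i j : nat) : R :=
  if Rle_dec (M i j) 0 then M i j * cos r else M i j.

Definition tilde (m : nat) (M : nat -> nat -> R) (r : R) : nat -> nat -> R :=
  fun i j =>
    if Nat.eqb i j
    then - rsum m (fun k => if Nat.eqb k i then 0 else tilde_off M r i k)
    else tilde_off M r i j.

(* Let x be an eigenvector of L for chi1 in 1^perp.  The matrix L - tilde L^r has
   nonpositive off-diagonal entries (since cos r <= 1) and zero row sums, so it is a
   Laplacian and x'(L - tilde L^r)x >= 0.  Hence the Rayleigh quotient of tilde L^r
   at x is at most chi1.  The minimum of that Rayleigh quotient over the unit sphere
   of 1^perp is attained (compactness) and is an eigenvalue of tilde L^r on 1^perp,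
   so chi2 <= min <= chi1. *)

From Pilot Require Import Defs.
From Stdlib Require Import Reals Lra Lia.
Open Scope R_scope.

Lemma rsum_ext n f g : (forall i, (i < n)%nat -> f i = g i) -> rsum n f = rsum n g.
Proof.
induction n as [|n IH]; intros H; simpl; [reflexivity|].
rewrite IH by (intros; apply H; lia). rewrite H by lia. reflexivity.
Qed.

Lemma rsum_add n f g : rsum n (fun i => f i + g i) = rsum n f + rsum n g.
Proof. induction n; simpl; [lra | rewrite IHn; lra]. Qed.

Lemma rsum_sub n f g : rsum n (fun i => f i - g i) = rsum n f - rsum n g.
Proof. induction n; simpl; [lra | rewrite IHn; lra]. Qed.

Lemma rsum_scal n c f : rsum n (fun i => c * f i) = c * rsum n f.
Proof. induction n; simpl; [lra | rewrite IHn; lra]. Qed.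

Lemma rsum_zero n f : (forall i, (i < n)%nat -> f i = 0) -> rsum n f = 0.
Proof.
induction n as [|n IH]; intros H; simpl; [reflexivity|].
rewrite IH by (intros; apply H; lia). rewrite H by lia. lra.
Qed.

Lemma rsum_swap n k (f : nat -> nat -> R) :
  rsum n (fun i => rsum k (fun j => f i j)) = rsum k (fun j => rsum n (fun i => f i j)).
Proof.
induction n as [|n IH]; simpl.
- symmetry. apply rsum_zero. reflexivity.
- rewrite IH, <- rsum_add. reflexivity.
Qed.

Lemma rsum_le n f g : (forall i, (i < n)%nat -> f i <= g i) -> rsum n f <= rsum n g.
Proof.
induction n as [|n IH]; intros H; simpl; [lra|].
assert (rsum n f <= rsum n g) by (apply IH; intros; apply H; lia).
assert (f n <= g n) by (apply H; lia).
lra.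
Qed.

Lemma rsum_nonneg n f : (forall i, (i < n)%nat -> 0 <= f i) -> 0 <= rsum n f.
Proof. intros H. rewrite <- (rsum_zero n (fun _ => 0)) by auto. apply rsum_le; auto. Qed.

Lemma rsum_nonpos n f : (forall i, (i < n)%nat -> f i <= 0) -> rsum n f <= 0.
Proof. intros H. rewrite <- (rsum_zero n (fun _ => 0)) by auto. apply rsum_le; auto. Qed.

Lemma rsum_split n f i : (i < n)%nat ->
  rsum n f = f i + rsum n (fun k => if Nat.eqb k i then 0 else f k).
Proof.
induction n as [|n IH]; intros Hi; simpl; [lia|].
destruct (Nat.eq_dec i n) as [->|Hne].
- rewrite Nat.eqb_refl, (rsum_ext n (fun k => if Nat.eqb k n then 0 else f k) f); [lra|].
  intros j Hj. destruct (Nat.eqb_spec j n); [lia | reflexivity].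
- rewrite (IH ltac:(lia)). destruct (Nat.eqb_spec n i); [lia | lra].
Qed.

Lemma rsum_ge_term n f i : (forall k, (k < n)%nat -> 0 <= f k) -> (i < n)%nat ->
  f i <= rsum n f.
Proof.
intros H Hi. rewrite (rsum_split n f i Hi).
assert (0 <= rsum n (fun k => if Nat.eqb k i then 0 else f k)); [|lra].
apply rsum_nonneg. intros k Hk. destruct (Nat.eqb k i); [lra | auto].
Qed.

Definition qf (m : nat) (M : nat -> nat -> R) (x : nat -> R) : R :=
  rsum m (fun i => x i * mulv m M x i).

Definition sqnorm (m : nat) (x : nat -> R) : R := rsum m (fun i => x i * x i).

Lemma mulv_ext m M x y : (forall i, (i < m)%nat -> x i = y i) ->
  forall i, mulv m M x i = mulv m M y i.
Proof. intros E i. apply rsum_ext. intros j Hj. rewrite E by exact Hj. reflexivity. Qed.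

Lemma qf_ext m M x y : (forall i, (i < m)%nat -> x i = y i) -> qf m M x = qf m M y.
Proof.
intros E. apply rsum_ext. intros i Hi. rewrite E, (mulv_ext m M x y E) by exact Hi.
reflexivity.
Qed.

Lemma sqnorm_ext m x y : (forall i, (i < m)%nat -> x i = y i) -> sqnorm m x = sqnorm m y.
Proof. intros E. apply rsum_ext. intros i Hi. rewrite E by exact Hi. reflexivity. Qed.

Lemma sqnorm_nonneg m x : 0 <= sqnorm m x.
Proof. apply rsum_nonneg. intros. nra. Qed.

Lemma sqr_le_sqnorm m x i : (i < m)%nat -> x i * x i <= sqnorm m x.
Proof. intros Hi. apply (rsum_ge_term m (fun k => x k * x k)); [intros; nra | exact Hi]. Qed.

Lemma sqnorm_pos m x : nonzero_vec m x -> 0 < sqnorm m x.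
Proof. intros [i [Hi Hx]]. assert (H := sqr_le_sqnorm m x i Hi). nra. Qed.

Lemma sqnorm_eq0 m x : sqnorm m x = 0 -> forall i, (i < m)%nat -> x i = 0.
Proof. intros H i Hi. assert (Hle := sqr_le_sqnorm m x i Hi). nra. Qed.

Lemma sqnorm_neq0 m x : sqnorm m x <> 0 -> nonzero_vec m x.
Proof.
induction m as [|m IH]; intros H; [contradiction H; reflexivity|].
destruct (Req_dec (x m) 0) as [Hx|Hx].
- destruct IH as [i [Hi Hxi]].
  + unfold sqnorm in H. simpl in H. rewrite Hx, Rmult_0_l, Rplus_0_r in H. exact H.
  + exists i. split; [lia | exact Hxi].
- exists m. split; [lia | exact Hx].
Qed.

Lemma qf_eig_eq m M lam x : eig_eq m M lam x -> qf m M x = lam * sqnorm m x.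
Proof.
intros Hx. unfold qf, sqnorm. rewrite <- rsum_scal. apply rsum_ext.
intros i Hi. rewrite Hx by exact Hi. ring.
Qed.

Lemma mulv_lin m M x y a b i :
  mulv m M (fun k => a * x k + b * y k) i = a * mulv m M x i + b * mulv m M y i.
Proof.
unfold mulv. rewrite <- !rsum_scal, <- rsum_add. apply rsum_ext. intros. ring.
Qed.

Lemma sum_mulv m M x : symmetric m M -> zero_row_sums m M -> rsum m (mulv m M x) = 0.
Proof.
intros Hs Hr. unfold mulv. rewrite rsum_swap. apply rsum_zero. intros j Hj.
rewrite (rsum_ext m _ (fun i => x j * M j i)).
- rewrite rsum_scal, Hr by exact Hj. ring.
- intros i Hi. rewrite (Hs i j Hi Hj). ring.
Qed.

Lemma bilinear_sym m M x y : symmetric m M ->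
  rsum m (fun i => x i * mulv m M y i) = rsum m (fun i => y i * mulv m M x i).
Proof.
intros Hs. unfold mulv.
rewrite (rsum_ext m _ (fun i => rsum m (fun j => x i * M i j * y j))).
2:{ intros i Hi. rewrite <- rsum_scal. apply rsum_ext. intros. ring. }
rewrite rsum_swap. apply rsum_ext. intros j Hj. rewrite <- rsum_scal.
apply rsum_ext. intros i Hi. rewrite (Hs i j Hi Hj). ring.
Qed.

Lemma qf_zero_row_sums m D x : symmetric m D -> zero_row_sums m D ->
  rsum m (fun i => rsum m (fun j => D i j * ((x i - x j) * (x i - x j)))) = -2 * qf m D x.
Proof.
intros Hs Hr. unfold qf.
rewrite (rsum_ext m _ (fun i => x i * x i * rsum m (fun j => D i j)
                                 + -2 * (x i * mulv m D x i)
                                 + rsum m (fun j => D i j * (x j * x j)))).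
2:{ intros i Hi. unfold mulv. rewrite <- !rsum_scal, <- !rsum_add.
    apply rsum_ext. intros. ring. }
rewrite !rsum_add, rsum_scal, rsum_swap.
rewrite (rsum_zero m (fun i => x i * x i * rsum m (fun j => D i j))).
2:{ intros i Hi. rewrite Hr by exact Hi. ring. }
rewrite (rsum_zero m (fun j => rsum m (fun i => D i j * (x j * x j)))).
2:{ intros j Hj. rewrite (rsum_ext m _ (fun i => x j * x j * D j i)).
    - rewrite rsum_scal, Hr by exact Hj. ring.
    - intros i Hi. rewrite (Hs i j Hi Hj). ring. }
ring.
Qed.

Lemma qf_laplacian_nonneg m D x : symmetric m D -> zero_row_sums m D ->
  (forall i j, (i < m)%nat -> (j < m)%nat -> i <> j -> D i j <= 0) -> 0 <= qf m D x.
Proof.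
intros Hs Hr Hoff.
enough (H : rsum m (fun i => rsum m (fun j => D i j * ((x i - x j) * (x i - x j)))) <= 0)
  by (rewrite qf_zero_row_sums in H by assumption; lra).
apply rsum_nonpos. intros i Hi. apply rsum_nonpos. intros j Hj.
destruct (Nat.eq_dec i j) as [->|Hne].
- replace (x j - x j) with 0 by ring. rewrite Rmult_0_l, Rmult_0_r. lra.
- assert (D i j <= 0) by (apply Hoff; assumption).
  assert (0 <= (x i - x j) * (x i - x j)) by apply Rle_0_sqr. nra.
Qed.

Lemma tilde_symmetric m L r : symmetric m L -> symmetric m (tilde m L r).
Proof.
intros HL i j Hi Hj. unfold tilde.
destruct (Nat.eqb_spec i j) as [->|Hne]; [rewrite Nat.eqb_refl; reflexivity|].
destruct (Nat.eqb_spec j i); [lia|].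
unfold tilde_off. rewrite (HL i j Hi Hj). reflexivity.
Qed.

Lemma tilde_zero_row_sums m L r : zero_row_sums m (tilde m L r).
Proof.
intros i Hi. rewrite (rsum_split m _ i Hi). unfold tilde at 1. rewrite Nat.eqb_refl.
rewrite (rsum_ext m (fun k => if Nat.eqb k i then 0 else tilde m L r i k)
                   (fun k => if Nat.eqb k i then 0 else tilde_off L r i k)); [lra|].
intros k Hk. unfold tilde. destruct (Nat.eqb_spec k i); [reflexivity|].
destruct (Nat.eqb_spec i k); [lia | reflexivity].
Qed.

Lemma le_tilde_offdiag m L r i j : i <> j -> L i j <= tilde m L r i j.
Proof.
intros Hne. unfold tilde. destruct (Nat.eqb_spec i j); [lia|]. unfold tilde_off.
destruct (Rle_dec (L i j) 0); [|lra].
assert (cos r <= 1) by apply COS_bound. nra.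
Qed.

Lemma qf_sub m L T x : qf m L x - qf m T x = qf m (fun i j => L i j - T i j) x.
Proof.
unfold qf. rewrite <- rsum_sub. apply rsum_ext. intros i Hi. unfold mulv.
rewrite (rsum_ext m (fun j => (L i j - T i j) * x j) (fun j => L i j * x j - T i j * x j))
  by (intros; ring).
rewrite rsum_sub. ring.
Qed.

Lemma qf_tilde_le m L r x : symmetric m L -> zero_row_sums m L ->
  qf m (tilde m L r) x <= qf m L x.
Proof.
intros Hs Hr.
enough (0 <= qf m L x - qf m (tilde m L r) x) by lra.
rewrite qf_sub. apply qf_laplacian_nonneg.
- intros i j Hi Hj. rewrite (Hs i j Hi Hj), (tilde_symmetric m L r Hs i j Hi Hj).
  reflexivity.
- intros i Hi. rewrite (rsum_sub m (fun j => L i j) (fun j => tilde m L r i j)).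
  rewrite Hr, tilde_zero_row_sums by exact Hi. ring.
- intros i j _ _ Hne. assert (H := le_tilde_offdiag m L r i j Hne). lra.
Qed.

Lemma linear_coef_eq0 b c : (forall t, 0 <= b * t + c * (t * t)) -> b = 0.
Proof.
intros H. destruct (Req_dec b 0) as [|Hb]; [assumption|]. exfalso.
set (d := Rabs c + 1).
assert (Hd : 0 < d) by (unfold d; assert (0 <= Rabs c) by apply Rabs_pos; lra).
assert (Hc : c < d) by (unfold d; assert (c <= Rabs c) by apply RRle_abs; lra).
(* at [t = -b/d] the quadratic term cannot compensate the linear one *)
assert (Ht := H (- b / d)).
assert (E : b * (- b / d) + c * ((- b / d) * (- b / d)) = b * b * (c - d) / (d * d))
  by (field; lra).
rewrite E in Ht. unfold Rdiv in Ht.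
assert (0 < / (d * d)) by (apply Rinv_0_lt_compat; nra).
assert (Hb2 : 0 < b * b) by (apply Rsqr_pos_lt; exact Hb).
assert (0 < b * b * (d - c) * / (d * d)).
{ apply Rmult_lt_0_compat; [apply Rmult_lt_0_compat|]; lra. }
lra.
Qed.

Lemma sqnorm_scal m c x : sqnorm m (fun i => c * x i) = c * c * sqnorm m x.
Proof. unfold sqnorm. rewrite <- rsum_scal. apply rsum_ext. intros. ring. Qed.

Lemma qf_scal m M c x : qf m M (fun i => c * x i) = c * c * qf m M x.
Proof.
unfold qf. rewrite <- rsum_scal. apply rsum_ext. intros i _.
rewrite (mulv_ext m M _ (fun k => c * x k + 0 * x k)) by (intros; ring).
rewrite mulv_lin. ring.
Qed.

Lemma in_perp1_scal m c x : in_perp1 m x -> in_perp1 m (fun i => c * x i).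
Proof. unfold in_perp1. intros Hx. rewrite rsum_scal, Hx. ring. Qed.

Lemma in_perp1_lin m x y a b : in_perp1 m x -> in_perp1 m y ->
  in_perp1 m (fun i => a * x i + b * y i).
Proof. unfold in_perp1. intros Hx Hy. rewrite rsum_add, !rsum_scal, Hx, Hy. ring. Qed.

Lemma unit_rescale m x : 0 < sqnorm m x ->
  sqnorm m (fun i => / sqrt (sqnorm m x) * x i) = 1.
Proof.
intros Hx. rewrite sqnorm_scal.
assert (Hs : 0 < sqrt (sqnorm m x)) by (apply sqrt_lt_R0; exact Hx).
rewrite <- (sqrt_sqrt (sqnorm m x)) at 3 by lra. field. lra.
Qed.

Lemma exists_unit_perp1 m x : in_perp1 m x -> nonzero_vec m x ->
  exists u, in_perp1 m u /\ sqnorm m u = 1.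
Proof.
intros Hx Hnz. exists (fun i => / sqrt (sqnorm m x) * x i). split.
- apply in_perp1_scal. exact Hx.
- apply unit_rescale, sqnorm_pos. exact Hnz.
Qed.

Section RayleighQuotient.

Variables (m : nat) (T : nat -> nat -> R).
Hypotheses (T_sym : symmetric m T) (T_rows : zero_row_sums m T).

Lemma rayleigh_bound_of_unit_min y :
  (forall z, in_perp1 m z -> sqnorm m z = 1 -> qf m T y <= qf m T z) ->
  forall z, in_perp1 m z -> qf m T y * sqnorm m z <= qf m T z.
Proof.
intros Hmin z Hz. destruct (Req_dec (sqnorm m z) 0) as [H0|H0].
- rewrite H0, (qf_ext m T z (fun _ => 0)) by (apply sqnorm_eq0; exact H0).
  enough (qf m T (fun _ => 0) = 0) by lra.
  unfold qf. apply rsum_zero. intros. ring.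
- assert (Hpos : 0 < sqnorm m z) by (assert (H := sqnorm_nonneg m z); lra).
  set (c := / sqrt (sqnorm m z)).
  assert (Hunit := unit_rescale m z Hpos). fold c in Hunit.
  assert (Hq := Hmin (fun i => c * z i)).
  rewrite qf_scal in Hq. rewrite sqnorm_scal in Hunit.
  assert (Hle : qf m T y <= c * c * qf m T z).
  { apply Hq; [apply in_perp1_scal; exact Hz | rewrite sqnorm_scal; exact Hunit]. }
  replace (qf m T z) with (c * c * sqnorm m z * qf m T z) by (rewrite Hunit; ring).
  assert (0 <= (c * c * qf m T z - qf m T y) * sqnorm m z) by (apply Rmult_le_pos; lra).
  lra.
Qed.

Lemma qf_add_scal y w t : qf m T (fun i => y i + t * w i)
  = qf m T y + 2 * t * rsum m (fun i => w i * mulv m T y i) + t * t * qf m T w.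
Proof.
unfold qf.
rewrite (rsum_ext m _ (fun i => (y i * mulv m T y i + t * (y i * mulv m T w i))
                                 + (t * (w i * mulv m T y i) + t * t * (w i * mulv m T w i)))).
2:{ intros i _. rewrite (mulv_ext m T _ (fun k => 1 * y k + t * w k)) by (intros; ring).
    rewrite mulv_lin. ring. }
rewrite !rsum_add, !rsum_scal, (bilinear_sym m T y w T_sym). ring.
Qed.

Lemma sqnorm_add_scal y w t : sqnorm m (fun i => y i + t * w i)
  = sqnorm m y + 2 * t * rsum m (fun i => w i * y i) + t * t * sqnorm m w.
Proof.
unfold sqnorm.
rewrite (rsum_ext m _ (fun i => (y i * y i + (2 * t) * (w i * y i)) + (t * t) * (w i * w i)))
  by (intros; ring).
rewrite !rsum_add, !rsum_scal. ring.
Qed.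

(* A minimiser [y] of [qf - lam * sqnorm] on [1^perp]: the residual [w = T y - lam y]
   stays in [1^perp], and along [y + t w] the form is [2 t |w|^2 + O(t^2)]. *)
Lemma eig_eq_of_rayleigh_min lam y :
  in_perp1 m y -> qf m T y = lam * sqnorm m y ->
  (forall z, in_perp1 m z -> lam * sqnorm m z <= qf m T z) ->
  eig_eq m T lam y.
Proof.
intros Hy Hq Hmin.
set (w := fun i => mulv m T y i - lam * y i).
assert (Hw : in_perp1 m w).
{ unfold in_perp1, w. rewrite rsum_sub, rsum_scal, sum_mulv by assumption.
  unfold in_perp1 in Hy. rewrite Hy. ring. }
assert (Hnw : sqnorm m w
              = rsum m (fun i => w i * mulv m T y i) - lam * rsum m (fun i => w i * y i)).
{ unfold sqnorm. rewrite <- rsum_scal, <- rsum_sub. apply rsum_ext.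
  intros i _. unfold w at 2. ring. }
assert (Hw0 : sqnorm m w = 0).
{ enough (2 * sqnorm m w = 0) by lra.
  apply (linear_coef_eq0 (2 * sqnorm m w) (qf m T w - lam * sqnorm m w)). intros t.
  assert (Hyt : in_perp1 m (fun i => 1 * y i + t * w i)) by (apply in_perp1_lin; assumption).
  assert (H := Hmin _ Hyt).
  rewrite (qf_ext m T _ (fun i => y i + t * w i)) in H by (intros; ring).
  rewrite (sqnorm_ext m _ (fun i => y i + t * w i)) in H by (intros; ring).
  rewrite qf_add_scal, sqnorm_add_scal, Hq in H.
  nra. }
intros i Hi. assert (Hwi := sqnorm_eq0 m w Hw0 i Hi). unfold w in Hwi. lra.
Qed.

Lemma eigenvalue_of_unit_min y :
  in_perp1 m y -> sqnorm m y = 1 ->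
  (forall z, in_perp1 m z -> sqnorm m z = 1 -> qf m T y <= qf m T z) ->
  eigenvalue_on_perp1 m T (qf m T y).
Proof.
intros Hy Hn Hmin. exists y. split; [exact Hy|]. split.
- apply sqnorm_neq0. lra.
- apply eig_eq_of_rayleigh_min; [exact Hy | rewrite Hn; ring |].
  apply rayleigh_bound_of_unit_min. exact Hmin.
Qed.

End RayleighQuotient.

Lemma unit_coord_bound m x i : sqnorm m x = 1 -> (i < m)%nat -> -1 <= x i <= 1.
Proof. intros Hx Hi. assert (H := sqr_le_sqnorm m x i Hi). split; nra. Qed.

From mathcomp Require Import all_boot all_algebra.
From mathcomp Require Import all_classical all_reals all_analysis.
From mathcomp Require Import Rstruct Rstruct_topology.

Definition vec_of_row {m : nat} (v : 'rV[R]_m) (i : nat) : R :=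
  match @insub nat (fun k => (k < m)%N) 'I_m i with
  | Some j => v ord0 j
  | None => 0%R
  end.

Lemma vec_of_row_ord m (v : 'rV[R]_m) (j : 'I_m) : vec_of_row v j = v ord0 j.
Proof. by rewrite /vec_of_row; case: insubP => [k _ /val_inj -> //|]; rewrite ltn_ord. Qed.

Lemma vec_of_row_mx {m} (z : nat -> R) i :
  (i < m)%coq_nat -> vec_of_row (\row_(j < m) z j)%R i = z i.
Proof. by move=> /ssrnat.ltP Hi; rewrite (_ : i = Ordinal Hi) // vec_of_row_ord mxE. Qed.

Lemma continuous_vec_of_row {m} i : continuous (fun v : 'rV[R]_m => vec_of_row v i).
Proof.
rewrite /vec_of_row; case: insubP => [j _ _|_].
- exact: coord_continuous.
- exact: cst_continuous.
Qed.

Lemma continuous_rsum {T : topologicalType} n (h : nat -> T -> R) :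
  (forall j, continuous (h j)) -> continuous (fun v => rsum n (fun j => h j v)).
Proof.
move=> hc; elim: n => [|n IH] /=; first exact: cst_continuous.
by move=> v; apply: (@continuousD R R^o); [exact: IH | exact: hc].
Qed.

Lemma continuous_qf m (M : nat -> nat -> R) :
  continuous (fun v : 'rV[R]_m => qf m M (vec_of_row v)).
Proof.
have cMv i : continuous (fun v : 'rV[R]_m => mulv m M (vec_of_row v) i).
  apply: continuous_rsum => j v.
  exact: continuousM (@cst_continuous _ _ (M i j) v) (continuous_vec_of_row j v).
apply: continuous_rsum => i v.
exact: continuousM (continuous_vec_of_row i v) (cMv i v).
Qed.

Lemma continuous_sqnorm m : continuous (fun v : 'rV[R]_m => sqnorm m (vec_of_row v)).
Proof.
apply: continuous_rsum => i v.
exact: continuousM (continuous_vec_of_row i v) (continuous_vec_of_row i v).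
Qed.

Lemma continuous_sum m : continuous (fun v : 'rV[R]_m => rsum m (vec_of_row v)).
Proof. by apply: continuous_rsum => j; exact: continuous_vec_of_row. Qed.

Lemma exists_rayleigh_minimizer m (T : nat -> nat -> R) :
  (exists x, in_perp1 m x /\ sqnorm m x = 1) ->
  exists y, [/\ in_perp1 m y, sqnorm m y = 1 &
    forall z, in_perp1 m z -> sqnorm m z = 1 -> Rle (qf m T y) (qf m T z)].
Proof.
move=> [x [x_perp x_unit]].
pose S := ((fun v : 'rV[R]_m => rsum m (vec_of_row v)) @^-1` [set 0%R] `&`
           (fun v : 'rV[R]_m => sqnorm m (vec_of_row v)) @^-1` [set 1%R])%classic.
pose cube := [set v : 'rV[R]_m | forall i, `[(-1)%R, 1%R]%classic (v ord0 i)]%classic.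
have S_cube : S = (cube `&` S)%classic.
  apply/seteqP; split=> v; last by case.
  move=> Sv; split=> // i /=; rewrite in_itv /=.
  have [/RleP lo /RleP hi] := unit_coord_bound m _ i (proj2 Sv) (ssrnat.ltP (ltn_ord i)).
  by rewrite -vec_of_row_ord lo hi.
have S_compact : compact S.
  rewrite S_cube; apply: compact_closedI.
    apply: (@rV_compact R m (fun=> (`[(-1)%R, 1%R]%classic : set R))) => _.
    exact: segment_compact.
  apply: closedI; apply: preimage_closed.
  - by move=> v _; exact: continuous_sum.
  - exact: closed_eq.
  - by move=> v _; exact: continuous_sqnorm.
  - exact: closed_eq.
have S_nonempty : (S !=set0)%classic.
  exists (\row_(j < m) x j)%R; split.
  - by rewrite /= (rsum_ext _ _ _ (@vec_of_row_mx m x)).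
  - by rewrite /= (sqnorm_ext _ _ _ (@vec_of_row_mx m x)).
have [c] := EVT_min_rV S_nonempty S_compact (continuous_subspaceT (continuous_qf m T)).
rewrite inE => -[c_perp c_unit] c_min.
exists (vec_of_row c); split=> // z z_perp z_unit.
rewrite -(qf_ext _ _ _ _ (@vec_of_row_mx m z)); apply/RleP; apply: c_min.
rewrite inE; split.
- by rewrite /= (rsum_ext _ _ _ (@vec_of_row_mx m z)).
- by rewrite /= (sqnorm_ext _ _ _ (@vec_of_row_mx m z)).
Qed.

Import Pilot.Defs.
Open Scope R_scope.

Theorem lemma2 (m : nat) (L : nat -> nat -> R) (r chi1 chi2 : R) :
  symmetric m L ->
  zero_row_sums m L ->
  simple_eigenvalue m L 0 ->
  0 <= r < PI / 2 ->
  smallest_eigenvalue_on_perp1 m L chi1 ->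
  smallest_eigenvalue_on_perp1 m (tilde m L r) chi2 ->
  chi1 >= chi2.
Proof.
intros L_sym L_rows _ _ [[x [x_perp [x_nz x_eig]]] _] [_ chi2_min].
set (T := tilde m L r).
destruct (exists_rayleigh_minimizer m T (exists_unit_perp1 m x x_perp x_nz))
  as [y [y_perp y_unit y_min]].
assert (lam_eig : eigenvalue_on_perp1 m T (qf m T y)).
{ apply eigenvalue_of_unit_min; try assumption.
  - apply tilde_symmetric. exact L_sym.
  - apply tilde_zero_row_sums. }
assert (chi2_le := chi2_min _ lam_eig).
assert (lam_le := rayleigh_bound_of_unit_min m T y y_min x x_perp).
assert (T_le_L := qf_tilde_le m L r x L_sym L_rows). fold T in T_le_L.
rewrite (qf_eig_eq m L chi1 x x_eig) in T_le_L.
assert (x_pos := sqnorm_pos m x x_nz).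
nra.
Qed.
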